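(* Let $\mathcal{C}=\mathsf{CSS}(A,B)$ and let $U$ be a 1-local Clifford circuit. If $U$ is a logical operator on $\mathcal{C}$, then it is equivalent to some depth-1 circuit $V$ with gates from $\{I,P,HP,PH,PHP,H\}$ such that for all $a\in A$ and all $b\in B$: $a\cap V_{P,HP,PH,H}\in B$, $a\cap V_{PH,H}\in A$, $b\cap V_{HP,PHP,PH,H}\in A$, and $b\cap V_{HP,H}\in B$.
   Context: $\mathsf{CSS}(A,B)$ is the CSS code on $n$ qubits built from classical codes $A,B\subseteq\mathbb{F}_2^n$ with $B\subseteq A^\perp$, whose stabilizer group is generated by the $X$-stabilizers $X^a$ ($a\in A$) and the $Z$-stabilizers $Z^b$ ($b\in B$); here for $a\in\mathbb{F}_2^n$ and a single-qubit gate $G$, $G^a=\bigotimes_{i:a_i=1}G_i$. A logical operator is any operator preserving the codespace. A 1-local Clifford circuit is a tensor product of single-qubit Clifford gates. ''Equivalent'' means: every 1-local Clifford circuit $U$ can be written as $U=VQ$ where $Q$ is a Pauli circuit and $V$ is a depth-1 circuit with each single-qubit gate in $\{I,P,HP,PHP,PH,H\}$ ($P$ the phase gate, $H$ the Hadamard); $U$ is a logical operator with logical action $\bar U$ iff $V$ is (up to phase) a logical operator with the same action up to phase. For a set $K$ of these single-qubit gates, $V_K=\{i : V_i\in K\}$ (the set of physical qubits on which $V$ applies a gate from $K$). For $a\in\mathbb{F}_2^n$ and $h\subseteq\{1,\dots,n\}$, $a\cap h$ denotes the vector with $(a\cap h)_i=1$ iff $a_i=1$ and $i\in h$. Up to phase,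 the gates act by conjugation as: $I: X\mapsto X, Z\mapsto Z$; $P: X\mapsto XZ, Z\mapsto Z$; $HP: X\mapsto XZ, Z\mapsto X$; $PH: X\mapsto Z, Z\mapsto XZ$; $PHP: X\mapsto X, Z\mapsto XZ$; $H: X\mapsto Z, Z\mapsto X$. *)

(* Qubit states are functions 'rV['F_2]_n -> algC on the
   computational basis; operators are kernels (matrix entries) indexed by
   computational basis vectors. *)
From HB Require Import structures.
From mathcomp Require Import all_boot all_order all_algebra all_field.
Set Implicit Arguments. Unset Strict Implicit. Unset Printing Implicit Defensive.
Import Order.TTheory GRing.Theory Num.Theory.
Local Open Scope ring_scope.

Notation bits n := 'rV['F_2]_n.

Definition mx2 (a b c d : algC) : 'M[algC]_2 :=
  \matrix_(i < 2, j < 2)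
    if i == 0 :> nat then (if j == 0 :> nat then a else b)
    else (if j == 0 :> nat then c else d).

Definition Xg : 'M[algC]_2 := mx2 0 1 1 0.
Definition Zg : 'M[algC]_2 := mx2 1 0 0 (-1).
Definition Yg : 'M[algC]_2 := mx2 0 (- 'i) 'i 0.
Definition Pg : 'M[algC]_2 := mx2 1 0 0 'i.
Definition Hg : 'M[algC]_2 := (sqrtC 2)^-1 *: mx2 1 1 1 (-1).

(* single-qubit Clifford gates: the group generated by H and P
   (it contains the global phase e^{i pi/4} = (HP)^3) *)
Inductive clifford1 : 'M[algC]_2 -> Prop :=
| cliff_id : clifford1 1%:M
| cliff_H G : clifford1 G -> clifford1 (Hg *m G)
| cliff_P G : clifford1 G -> clifford1 (Pg *m G).

Definition pauli1 (G : 'M[algC]_2) : Prop :=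
  G = 1%:M \/ G = Xg \/ G = Yg \/ G = Zg.

Definition op n := bits n -> bits n -> algC.

Definition bidx (x : 'F_2) : 'I_2 := inord (val x).

Definition tens n (g : 'I_n -> 'M[algC]_2) : op n :=
  fun s t => \prod_(i < n) g i (bidx (s 0 i)) (bidx (t 0 i)).

Definition opmul n (U V : op n) : op n :=
  fun s t => \sum_(u : bits n) U s u * V u t.

Definition opapply n (U : op n) (psi : bits n -> algC) : bits n -> algC :=
  fun s => \sum_(t : bits n) U s t * psi t.

Definition gpow n (G : 'M[algC]_2) (a : bits n) : op n :=
  tens (fun i => if a 0 i == 1 then G else 1%:M).

(* codespace of CSS(A,B): the common +1 eigenspace of the stabilizer group
   generated by X^a (a in A) and Z^b (b in B); classical codes are the row
   spaces of A and B *)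
Definition in_codespace n (A B : 'M['F_2]_n) (psi : bits n -> algC) : Prop :=
  (forall a : bits n, (a <= A)%MS -> opapply (gpow Xg a) psi = psi) /\
  (forall b : bits n, (b <= B)%MS -> opapply (gpow Zg b) psi = psi).

Definition logical n (A B : 'M['F_2]_n) (U : op n) : Prop :=
  forall psi, in_codespace A B psi -> in_codespace A B (opapply U psi).

Inductive gate := gI | gP | gHP | gPHP | gPH | gH.

Definition gate_mx (g : gate) : 'M[algC]_2 :=
  match g with
  | gI => 1%:M
  | gP => Pg
  | gHP => Hg *m Pg
  | gPHP => Pg *m Hg *m Pg
  | gPH => Pg *m Hg
  | gH => Hg
  end.

Definition gate_eqb (g h : gate) : bool :=
  match g, h with
  | gI, gI | gP, gP | gHP, gHP | gPHP, gPHP | gPH, gPH | gH, gH => true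
  | _, _ => false
  end.

Definition gate_in (K : seq gate) (g : gate) : bool := has (gate_eqb g) K.

Definition cap_bits n (a : bits n) (h : 'I_n -> bool) : bits n :=
  \row_i (if h i then a 0 i else 0).

Definition VK n (v : 'I_n -> gate) (K : seq gate) : 'I_n -> bool :=
  fun i => gate_in K (v i).

(* Every single-qubit Clifford gate is, up to phase, one of the six
   representatives V times a Pauli matrix.  If U = V Q is logical and S is
   a stabiliser X^a or Z^b, then U^-1 S U stabilises the code as well, and is
   proportional to a Pauli operator X^x Z^z whose exponents (x, z) depend
   linearly on those of S through V alone.  Testing on the coset states of A
   shows that a Pauli operator fixing every code state up to a scalar has
   x in A and z in B.  So conjugation by V maps the finite set A x B injectively
   into itself, hence onto it, and the inverse conjugation, applied to (a, 0)
   and (0, b), gives the four conditions. *)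

From HB Require Import structures.
From mathcomp Require Import all_boot all_order all_algebra all_field.
From mathcomp Require Import ring.
From Stdlib Require Import FunctionalExtensionality.
Set Implicit Arguments. Unset Strict Implicit. Unset Printing Implicit Defensive.
Import GRing.Theory Num.Theory.
Local Open Scope ring_scope.

Definition proportional (M N : 'M[algC]_2) : Prop := exists c : algC, M = c *: N.

(* algC does not compute, so identities between the 2x2 Clifford matrices are
   checked on matrices of Gaussian integers; Hg is (sqrtC 2)^-1 times one. *)
Definition zi := (int * int)%type.
Definition zi_add (a b : zi) : zi := (a.1 + b.1, a.2 + b.2).
Definition zi_mul (a b : zi) : zi := (a.1 * b.1 - a.2 * b.2, a.1 * b.2 + a.2 * b.1).
Definition zi_val (a : zi) : algC := a.1%:~R + a.2%:~R * 'i.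

Lemma zi_valD a b : zi_val (zi_add a b) = zi_val a + zi_val b.
Proof. by case: a b => [a1 a2] [b1 b2]; rewrite /zi_val /= !rmorphD /=; ring. Qed.

Lemma zi_valM a b : zi_val (zi_mul a b) = zi_val a * zi_val b.
Proof.
case: a b => [a1 a2] [b1 b2]; rewrite /zi_val /= !(rmorphD, rmorphB, rmorphM) /=.
have i2 : 'i * 'i = -1 :> algC by rewrite -expr2 sqrCi.
transitivity (a1%:~R * b1%:~R + a2%:~R * b2%:~R * (-1) +
              (a1%:~R * b2%:~R + a2%:~R * b1%:~R) * 'i : algC); first ring.
by rewrite -i2; ring.
Qed.

Lemma zi_val_int (k : int) : zi_val (k, 0) = k%:~R.
Proof. by rewrite /zi_val mul0r addr0. Qed.

Definition zimx := (zi * zi * zi * zi)%type.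
Definition zimx_mul (M N : zimx) : zimx :=
  let '(a, b, c, d) := M in let '(e, f, g, h) := N in
  (zi_add (zi_mul a e) (zi_mul b g), zi_add (zi_mul a f) (zi_mul b h),
   zi_add (zi_mul c e) (zi_mul d g), zi_add (zi_mul c f) (zi_mul d h)).
Definition zimx_scale (k : zi) (M : zimx) : zimx :=
  let '(a, b, c, d) := M in (zi_mul k a, zi_mul k b, zi_mul k c, zi_mul k d).
Definition zimx_val (M : zimx) : 'M[algC]_2 :=
  let '(a, b, c, d) := M in mx2 (zi_val a) (zi_val b) (zi_val c) (zi_val d).

Lemma mx2_mul (a b c d a' b' c' d' : algC) :
  mx2 a b c d *m mx2 a' b' c' d' =
  mx2 (a * a' + b * c') (a * b' + b * d') (c * a' + d * c') (c * b' + d * d').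
Proof.
apply/matrixP => i j; rewrite !mxE !big_ord_recr big_ord0 /= !mxE /= add0r.
by case: i => [[|[|i]] ?] //; case: j => [[|[|j]] ?].
Qed.

Lemma mx2_scale (k a b c d : algC) :
  k *: mx2 a b c d = mx2 (k * a) (k * b) (k * c) (k * d).
Proof.
apply/matrixP => i j; rewrite !mxE.
by case: i => [[|[|i]] ?] //; case: j => [[|[|j]] ?].
Qed.

Lemma zimx_valM M N : zimx_val (zimx_mul M N) = zimx_val M *m zimx_val N.
Proof.
case: M => [[[a b] c] d]; case: N => [[[e f] g] h].
by rewrite /zimx_val /= mx2_mul !zi_valD !zi_valM.
Qed.

Lemma zimx_valZ k M : zimx_val (zimx_scale k M) = zi_val k *: zimx_val M.
Proof. by case: M => [[[a b] c] d]; rewrite /zimx_val /= mx2_scale !zi_valM. Qed.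

Definition small_zi : seq zi :=
  [seq (a, b) | a <- [:: -2; -1; 0; 1; 2], b <- [:: -2; -1; 0; 1; 2]]%R.

(* A sound but incomplete test: only the factors in small_zi are tried. *)
Definition zimx_parallel (M N : zimx) : bool :=
  has (fun k => M == zimx_scale k N) small_zi.

Lemma zimx_parallelP M N :
  zimx_parallel M N -> proportional (zimx_val M) (zimx_val N).
Proof. by case/hasP => k _ /eqP ->; exists (zi_val k); rewrite zimx_valZ. Qed.

Definition zI : zimx := ((1, 0), (0, 0), (0, 0), (1, 0)).
Definition zX : zimx := ((0, 0), (1, 0), (1, 0), (0, 0)).
Definition zZ : zimx := ((1, 0), (0, 0), (0, 0), (-1, 0)).
Definition zP : zimx := ((1, 0), (0, 0), (0, 0), (0, 1)).
Definition zH : zimx := ((1, 0), (1, 0), (1, 0), (-1, 0)).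

Definition zshift (x z : 'F_2) : zimx :=
  zimx_mul (if x == 1 then zX else zI) (if z == 1 then zZ else zI).

Lemma F2_cases (x : 'F_2) : x = 0 \/ x = 1.
Proof. by case: x => [[|[|//]] ?]; [left | right]; apply/val_inj. Qed.

Definition sgn (b : 'F_2) : algC := if b == 0 then 1 else -1.

Lemma sgnD a b : sgn (a + b) = sgn a * sgn b.
Proof.
by case: (F2_cases a) => ->; case: (F2_cases b) => ->;
  rewrite /sgn /= ?mul1r ?mulr1 ?mulrNN ?mulr1.
Qed.

Lemma sgn_eq1 a : sgn a = 1 -> a = 0.
Proof.
case: (F2_cases a) => -> //; rewrite /sgn /= => h.
by have := @ltrN10 algC; rewrite h ltr10.
Qed.

Lemma bidxE (x : 'F_2) : bidx x = x.
Proof. by apply: val_inj; rewrite /bidx /= inordK. Qed.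

(* The Pauli matrix X^x Z^z. *)
Definition pauli_shift (x z : 'F_2) : 'M[algC]_2 :=
  \matrix_(u, w) if (w : 'F_2) == (u : 'F_2) + x then sgn (z * (w : 'F_2)) else 0.

Lemma pauli_shiftE x z (u w : 'F_2) :
  pauli_shift x z (bidx u) (bidx w) = if w == u + x then sgn (z * w) else 0.
Proof. by rewrite mxE !bidxE. Qed.

Lemma zshiftE x z : zimx_val (zshift x z) = pauli_shift x z.
Proof.
apply/matrixP => u w; rewrite mxE.
case: (F2_cases x) => ->; case: (F2_cases z) => ->.
all: case: u => [[|[|//]] ?]; case: w => [[|[|//]] ?].
all: by rewrite /zshift /zimx_val /zi_val /= !mxE /sgn /= ?mul0r ?addr0.
Qed.

Lemma F2_addxx (b : 'F_2) : b + b = 0.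
Proof. by case: (F2_cases b) => ->; apply/eqP. Qed.

Definition zsgn (b : 'F_2) : zi := if b == 0 then (1, 0) else (-1, 0).

Lemma zi_val_sgn b : zi_val (zsgn b) = sgn b.
Proof. by rewrite /zsgn /sgn; case: ifP; rewrite zi_val_int. Qed.

Lemma pauli_shift_mul x z x' z' :
  pauli_shift x z *m pauli_shift x' z' = sgn (z * x') *: pauli_shift (x + x') (z + z').
Proof.
rewrite -!zshiftE -zimx_valM -zi_val_sgn -zimx_valZ; congr zimx_val.
by case: (F2_cases x) => ->; case: (F2_cases z) => ->;
   case: (F2_cases x') => ->; case: (F2_cases z') => ->.
Qed.

Lemma pauli_shift_comm x z x' z' :
  pauli_shift x z *m pauli_shift x' z' =
  sgn (z * x' + z' * x) *: (pauli_shift x' z' *m pauli_shift x z).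
Proof.
rewrite !pauli_shift_mul scalerA -sgnD -addrA F2_addxx addr0.
by rewrite (addrC x') (addrC z').
Qed.

Ltac mx2_entries :=
  apply/matrixP => -[[|[|//]] ?] -[[|[|//]] ?]; rewrite !mxE /sgn /= ?mulr1n ?mulr0n.

Lemma pauli_shift00 : pauli_shift 0 0 = 1%:M.
Proof. by mx2_entries; reflexivity. Qed.

Lemma pauli1_shift Q : pauli1 Q -> exists x z (d : algC), Q = d *: pauli_shift x z.
Proof.
case=> [->|[->|[->|->]]]; [exists 0, 0, 1 | exists 1, 0, 1 | exists 1, 1, 'i | exists 0, 1, 1].
all: by mx2_entries; rewrite ?mulr0 ?mulr1 ?mul1r ?mulrN1; reflexivity.
Qed.

Lemma shift_pauli1 x z : exists Q (d : algC), pauli1 Q /\ pauli_shift x z = d *: Q.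
Proof.
have iN : - 'i * 'i = 1 :> algC by rewrite mulNr -expr2 sqrCi opprK.
case: (F2_cases x) => ->; case: (F2_cases z) => ->;
  [exists 1%:M, 1 | exists Zg, 1 | exists Xg, 1 | exists Yg, (- 'i)];
  (split; first by rewrite /pauli1; tauto).
all: by mx2_entries; rewrite ?mulr0 ?mulr1 ?mul1r ?mulrN ?iN; reflexivity.
Qed.

Lemma pauli_shiftX : pauli_shift 1 0 = Xg.
Proof. by mx2_entries; reflexivity. Qed.

Lemma pauli_shiftZ : pauli_shift 0 1 = Zg.
Proof. by mx2_entries; reflexivity. Qed.

Lemma zPE : zimx_val zP = Pg.
Proof. by rewrite /zimx_val /Pg /zi_val /= !mul0r !addr0 mul1r add0r. Qed.

Lemma zHE : Hg = (sqrtC 2)^-1 *: zimx_val zH.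
Proof. by rewrite /zimx_val /Hg /zi_val /= !mul0r !addr0. Qed.

Lemma zIE : zimx_val zI = 1%:M.
Proof. by rewrite -pauli_shift00 -zshiftE. Qed.

Definition gate_norm (v : gate) : algC :=
  match v with gI | gP => 1 | _ => (sqrtC 2)^-1 end.

Definition zgate (v : gate) : zimx :=
  match v with
  | gI => zI
  | gP => zP
  | gHP => zimx_mul zH zP
  | gPHP => zimx_mul (zimx_mul zP zH) zP
  | gPH => zimx_mul zP zH
  | gH => zH
  end.

Lemma gate_norm_neq0 v : gate_norm v != 0.
Proof. by case: v; rewrite ?oner_neq0 // invr_eq0 sqrtC_eq0 pnatr_eq0. Qed.

Lemma gate_mxE v : gate_mx v = gate_norm v *: zimx_val (zgate v).
Proof.
case: v; rewrite /gate_mx /gate_norm /zgate ?scale1r ?zIE ?zPE //.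
- by rewrite zimx_valM zHE zPE scalemxAl.
- by rewrite !zimx_valM zHE zPE -scalemxAr -scalemxAl.
- by rewrite zimx_valM zHE zPE scalemxAr.
- by rewrite zHE.
Qed.

Lemma gate_table (G : 'M[algC]_2) (k : algC) (zG : zimx) v v' x z :
  G = k *: zimx_val zG ->
  zimx_parallel (zimx_mul zG (zgate v)) (zimx_mul (zgate v') (zshift x z)) ->
  proportional (G *m gate_mx v) (gate_mx v' *m pauli_shift x z).
Proof.
move=> -> /zimx_parallelP [c E].
exists (k * gate_norm v * c / gate_norm v').
rewrite !gate_mxE -zshiftE -!scalemxAl -!scalemxAr !scalerA -!zimx_valM E scalerA.
by rewrite zimx_valM divfK ?gate_norm_neq0.
Qed.

Lemma Hg_gate_table v :
  exists v' x z, proportional (Hg *m gate_mx v) (gate_mx v' *m pauli_shift x z).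
Proof.
case: v; [exists gH, 0, 0 | exists gHP, 0, 0 | exists gP, 0, 0
        | exists gPH, 1, 0 | exists gPHP, 1, 0 | exists gI, 0, 0].
all: exact: gate_table zHE _.
Qed.

Lemma Pg_gate_table v :
  exists v' x z, proportional (Pg *m gate_mx v) (gate_mx v' *m pauli_shift x z).
Proof.
have zPE' : Pg = 1 *: zimx_val zP by rewrite scale1r zPE.
case: v; [exists gP, 0, 0 | exists gI, 0, 1 | exists gPHP, 0, 0
        | exists gHP, 1, 1 | exists gH, 1, 0 | exists gPH, 0, 0].
all: exact: gate_table zPE' _.
Qed.

Lemma shift_form_mull G G' :
  (forall v, exists v' x z, proportional (G *m gate_mx v) (gate_mx v' *m pauli_shift x z)) ->
  (exists v x z (c : algC), G' = c *: (gate_mx v *m pauli_shift x z)) ->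
  exists v x z (c : algC), G *m G' = c *: (gate_mx v *m pauli_shift x z).
Proof.
move=> table [v [x [z [c ->]]]].
have [v' [x' [z' [d GV]]]] := table v.
exists v', (x' + x), (z' + z), (c * d * sgn (z' * x)).
rewrite -scalemxAr mulmxA GV -scalemxAl -mulmxA pauli_shift_mul.
by rewrite -!scalemxAr !scalerA.
Qed.

Lemma clifford1_shift_form G :
  clifford1 G -> exists v x z (c : algC), G = c *: (gate_mx v *m pauli_shift x z).
Proof.
elim=> [|G' _ IH|G' _ IH].
- by exists gI, 0, 0, 1; rewrite pauli_shift00 mulmx1 scale1r.
- exact: shift_form_mull Hg_gate_table IH.
- exact: shift_form_mull Pg_gate_table IH.
Qed.

Lemma clifford1_pauli_form G :
  clifford1 G -> exists v Q (c : algC), pauli1 Q /\ G = c *: (gate_mx v *m Q).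
Proof.
move=> /clifford1_shift_form [v [x [z [c ->]]]].
have [Q [d [pQ ->]]] := shift_pauli1 x z.
by exists v, Q, (c * d); split; rewrite // -scalemxAr scalerA.
Qed.

Lemma Hg_invol : Hg *m Hg = 1%:M.
Proof.
rewrite zHE -scalemxAl -scalemxAr scalerA -zimx_valM.
have -> : zimx_mul zH zH = zimx_scale (2, 0) zI by [].
rewrite zimx_valZ zi_val_int zIE scalerA -invfM -expr2 sqrtCK.
by rewrite mulVf ?scale1r ?pnatr_eq0.
Qed.

Lemma Pg_order4 : Pg *m (Pg *m Pg *m Pg) = 1%:M.
Proof. by rewrite -zPE -!zimx_valM -zIE. Qed.

Lemma clifford1_unit G : clifford1 G -> G \in unitmx.
Proof.
elim=> [|G' _ IH|G' _ IH]; rewrite ?unitmx1 // unitmx_mul IH andbT.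
- exact: (mulmx1_unit Hg_invol).1.
- exact: (mulmx1_unit Pg_order4).1.
Qed.

(* With V = gate_mx v, V^-1 X V is proportional to X^[v \in conjX_x] Z^[v \in conjX_z],
   and V^-1 Z V to X^[v \in conjZ_x] Z^[v \in conjZ_z]. *)
Definition conjX_x : seq gate := [:: gI; gP; gPH; gPHP].
Definition conjX_z : seq gate := [:: gP; gPH; gHP; gH].
Definition conjZ_x : seq gate := [:: gPH; gPHP; gHP; gH].
Definition conjZ_z : seq gate := [:: gI; gP; gHP; gPHP].

Notation F2_of b := (if b then 1 else 0 : 'F_2).

Lemma Xg_gate_conj v :
  proportional (Xg *m gate_mx v)
    (gate_mx v *m pauli_shift (F2_of (gate_in conjX_x v)) (F2_of (gate_in conjX_z v))).
Proof.
have zXE : Xg = 1 *: zimx_val (zshift 1 0) by rewrite scale1r zshiftE pauli_shiftX.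
by case: v; exact: gate_table zXE _.
Qed.

Lemma Zg_gate_conj v :
  proportional (Zg *m gate_mx v)
    (gate_mx v *m pauli_shift (F2_of (gate_in conjZ_x v)) (F2_of (gate_in conjZ_z v))).
Proof.
have zZE : Zg = 1 *: zimx_val (zshift 0 1) by rewrite scale1r zshiftE pauli_shiftZ.
by case: v; exact: gate_table zZE _.
Qed.

Lemma gate_conj_pow G v bx bz (u : 'F_2) :
  proportional (G *m gate_mx v) (gate_mx v *m pauli_shift (F2_of bx) (F2_of bz)) ->
  proportional ((if u == 1 then G else 1%:M) *m gate_mx v)
    (gate_mx v *m pauli_shift (if bx then u else 0) (if bz then u else 0)).
Proof.
case: (F2_cases u) => -> /= GV; last exact: GV.
by exists 1; rewrite !if_same pauli_shift00 mul1mx mulmx1 scale1r.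
Qed.

Lemma pauli1_shift_comm Q x z :
  pauli1 Q -> proportional (pauli_shift x z *m Q) (Q *m pauli_shift x z).
Proof.
move=> /pauli1_shift [x' [z' [d ->]]]; exists (sgn (z * x' + z' * x)).
by rewrite -scalemxAr -scalemxAl (pauli_shift_comm x z) !scalerA mulrC.
Qed.

Lemma pauli_form_conj G v Q (c : algC) x z :
  pauli1 Q ->
  proportional (G *m gate_mx v) (gate_mx v *m pauli_shift x z) ->
  proportional (G *m (c *: (gate_mx v *m Q))) ((c *: (gate_mx v *m Q)) *m pauli_shift x z).
Proof.
move=> pQ [d GV]; have [e SQ] := pauli1_shift_comm x z pQ.
exists (d * e).
rewrite -scalemxAr mulmxA GV -!scalemxAl -!mulmxA SQ -scalemxAr.
by rewrite !scalerA -mulrA mulrC.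
Qed.

Section TensorOperators.
Variable n : nat.
Implicit Types (f h : 'I_n -> 'M[algC]_2) (U V : op n) (psi : bits n -> algC).

Lemma sum_ord2_bits (F : 'I_2 -> algC) : \sum_(l < 2) F l = \sum_(x : 'F_2) F (bidx x).
Proof.
rewrite (reindex bidx) //; apply: onW_bij.
by exists (fun l : 'I_2 => l : 'F_2) => x; rewrite bidxE //; apply: val_inj.
Qed.

Lemma sum_ffun_bits (F : {ffun 'I_n -> 'F_2} -> algC) :
  \sum_(f : {ffun 'I_n -> 'F_2}) F f = \sum_(u : bits n) F [ffun i => u 0 i].
Proof.
rewrite (reindex (fun u : bits n => [ffun i => u 0 i])) //; apply: onW_bij.
exists (fun f : {ffun 'I_n -> 'F_2} => \row_i f i) => x.
  by apply/rowP => i; rewrite mxE ffunE.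
by apply/ffunP => i; rewrite !ffunE mxE.
Qed.

Lemma tens_mul f h : opmul (tens f) (tens h) = tens (fun i => f i *m h i).
Proof.
do 2!apply: functional_extensionality => ?; rewrite /tens /opmul; symmetry.
under eq_bigr do rewrite mxE sum_ord2_bits.
rewrite bigA_distr_bigA /= sum_ffun_bits.
apply: eq_bigr => u _; rewrite -big_split; apply: eq_bigr => i _.
by rewrite ffunE bidxE.
Qed.

Lemma tens_scale (c : 'I_n -> algC) f :
  tens (fun i => c i *: f i) = fun s t => (\prod_i c i) * tens f s t.
Proof.
do 2!apply: functional_extensionality => ?.
by rewrite /tens -big_split; apply: eq_bigr => i _; rewrite mxE.
Qed.

Lemma opapply_mul U V psi : opapply (opmul U V) psi = opapply U (opapply V psi).
Proof.
apply: functional_extensionality => s; rewrite /opapply /opmul.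
under eq_bigr do rewrite mulr_suml.
rewrite exchange_big; apply: eq_bigr => u _.
by rewrite mulr_sumr; apply: eq_bigr => t _; rewrite mulrA.
Qed.

Lemma opapply_scale (c : algC) U psi :
  opapply (fun s t => c * U s t) psi = opapply U (fun t => c * psi t).
Proof.
apply: functional_extensionality => s; rewrite /opapply.
by apply: eq_bigr => t _; rewrite mulrCA mulrA.
Qed.

Definition dot (z t : bits n) : 'F_2 := (z *m t^T) 0 0.

Lemma dotD (z t t' : bits n) : dot z (t + t') = dot z t + dot z t'.
Proof. by rewrite /dot linearD /= mulmxDr mxE. Qed.

Lemma tens_shift_apply (x z : bits n) psi :
  opapply (tens (fun i => pauli_shift (x 0 i) (z 0 i))) psi =
  fun s => sgn (dot z (s + x)) * psi (s + x).
Proof.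
apply: functional_extensionality => s; rewrite /opapply (bigD1 (s + x)) //= big1 ?addr0.
  congr (_ * _); rewrite /tens /dot mxE (big_morph sgn sgnD (erefl (sgn 0))).
  by apply: eq_bigr => i _; rewrite pauli_shiftE !mxE eqxx.
move=> t /eqP neq_t; have [i neq_i] : exists i, t 0 i != (s + x) 0 i.
  apply/existsP; apply: contra_notT neq_t => /existsPn eq_st.
  by apply/rowP => i; apply/eqP/negPn/eq_st.
rewrite mxE in neq_i.
by rewrite /tens (bigD1 i) //= pauli_shiftE ifN // !mul0r.
Qed.

Lemma tens1_apply psi : opapply (tens (fun _ => 1%:M)) psi = psi.
Proof.
have -> : (fun _ : 'I_n => 1%:M) = fun i => pauli_shift ((0 : bits n) 0 i) ((0 : bits n) 0 i).
  by apply: functional_extensionality => i; rewrite mxE pauli_shift00.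
rewrite tens_shift_apply; apply: functional_extensionality => s.
by rewrite /dot mul0mx mxE addr0 /sgn eqxx mul1r.
Qed.

Lemma tens_invmx_applyK f psi :
  (forall i, f i \in unitmx) ->
  opapply (tens (fun i => invmx (f i))) (opapply (tens f) psi) = psi.
Proof.
move=> fU; rewrite -opapply_mul tens_mul.
have -> : (fun i => invmx (f i) *m f i) = fun _ => 1%:M.
  by apply: functional_extensionality => i; exact: mulVmx.
exact: tens1_apply.
Qed.

Lemma gpowX (a : bits n) : gpow Xg a = tens (fun i => pauli_shift (a 0 i) ((0 : bits n) 0 i)).
Proof.
congr tens; apply: functional_extensionality => i; rewrite mxE.
by case: (F2_cases (a 0 i)) => ->; rewrite ?pauli_shiftX ?pauli_shift00.
Qed.

Lemma gpowZ (b : bits n) : gpow Zg b = tens (fun i => pauli_shift ((0 : bits n) 0 i) (b 0 i)).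
Proof.
congr tens; apply: functional_extensionality => i; rewrite mxE.
by case: (F2_cases (b 0 i)) => ->; rewrite ?pauli_shiftZ ?pauli_shift00.
Qed.

End TensorOperators.

Section CSSCode.
Variables (n : nat) (A B : 'M['F_2]_n).
Hypothesis AB : A *m B^T = 0.

Lemma submxB_closed (a b : bits n) : (a <= A)%MS -> (b <= A)%MS -> ((a - b)%R <= A)%MS.
Proof. by move=> aA bA; rewrite addmx_sub // eqmx_opp. Qed.

Lemma addmx_sub_eq (u a : bits n) : (a <= A)%MS -> ((u + a)%R <= A)%MS = (u <= A)%MS.
Proof.
move=> aA; apply/idP/idP => uA; last exact: addmx_sub uA aA.
by rewrite -(addrK a u) submxB_closed.
Qed.

Lemma dot_orth (z t : bits n) : (z <= B)%MS -> t *m B^T = 0 -> dot z t = 0.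
Proof.
case/submxP => D -> tB; rewrite /dot -mulmxA -[B *m _]trmxK trmx_mul trmxK tB.
by rewrite trmx0 mulmx0 mxE.
Qed.

Definition coset_state (y : bits n) : bits n -> algC :=
  fun s => if ((s - y)%R <= A)%MS then 1 else 0.

Lemma coset_state_code (y : bits n) : y *m B^T = 0 -> in_codespace A B (coset_state y).
Proof.
move=> yB; split=> a aS; rewrite ?gpowX ?gpowZ tens_shift_apply;
  apply: functional_extensionality => s; rewrite /coset_state.
  by rewrite /dot mul0mx mxE /sgn eqxx mul1r (addrAC s) (addmx_sub_eq _ aS).
rewrite addr0; case: ifP => [/submxP [w sy] | _]; last by rewrite mulr0.
rewrite dot_orth ?/sgn ?eqxx ?mulr1 //.
by rewrite -(subrK y s) sy mulmxDl -mulmxA AB mulmx0 yB addr0.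
Qed.

Lemma orth_orth_submx (z : bits n) :
  (forall y : bits n, y *m B^T = 0 -> dot z y = 0) -> (z <= B)%MS.
Proof.
move=> zB; set K := kermx B^T.
have zK : (z <= kermx K^T)%MS.
  apply/sub_kermxP/rowP => j; rewrite !mxE -[RHS](zB (row j K)); last first.
    by rewrite -row_mul mulmx_ker row0.
  by rewrite /dot mxE; apply: eq_bigr => k _; rewrite !mxE.
have BK : (B <= kermx K^T)%MS.
  by apply/sub_kermxP; rewrite -[B]trmxK -trmx_mul mulmx_ker trmx0.
apply: submx_trans zK _; rewrite -(mxrank_leqif_sup BK).2.
by rewrite mxrank_ker mxrank_tr mxrank_ker mxrank_tr subKn // rank_leq_col.
Qed.

(* The coset state of 0 forces x in A, and then the coset state of any y
   orthogonal to B forces z . y = 0. *)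
Lemma shift_stabilizer_sub (x z : bits n) (c : algC) :
  (forall psi, in_codespace A B psi ->
     opapply (tens (fun i => pauli_shift (x 0 i) (z 0 i))) (fun t => c * psi t) = psi) ->
  (x <= A)%MS /\ (z <= B)%MS.
Proof.
move=> stab.
have at_y y s : y *m B^T = 0 ->
    sgn (dot z (s + x)) * (c * coset_state y (s + x)) = coset_state y s.
  by move=> yB; have := stab _ (coset_state_code yB); rewrite tens_shift_apply => /(congr1 (@^~ s)).
have := at_y 0 0 (mul0mx _ _); rewrite /coset_state !add0r !subr0 oppr0 sub0mx.
have [xA|_] := boolP (x <= A)%MS; last by rewrite !mulr0 => /eqP; rewrite eq_sym oner_eq0.
rewrite mulr1 => cx; split=> //; apply: orth_orth_submx => y yB.
apply: sgn_eq1; have := at_y y y yB; rewrite /coset_state (addrC y) addrK xA subrr sub0mx.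
by rewrite dotD sgnD mulr1 mulrAC cx mul1r.
Qed.

Lemma logical_conj_sub (g S : 'I_n -> 'M[algC]_2) (x z : bits n) :
  (forall i, g i \in unitmx) -> logical A B (tens g) ->
  (forall psi, in_codespace A B psi -> opapply (tens S) psi = psi) ->
  (forall i, proportional (S i *m g i) (g i *m pauli_shift (x 0 i) (z 0 i))) ->
  (x <= A)%MS /\ (z <= B)%MS.
Proof.
move=> gU logical_g stab /fin_all_exists [eps conj_g].
apply: (@shift_stabilizer_sub x z (\prod_i eps i)) => psi psiC.
rewrite -[RHS](tens_invmx_applyK psi gU) -(stab _ (logical_g _ psiC)).
rewrite -[opapply (tens S) _]opapply_mul tens_mul (functional_extensionality _ _ conj_g).
by rewrite tens_scale opapply_scale -tens_mul opapply_mul tens_invmx_applyK.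
Qed.

End CSSCode.

Lemma can_stable (T : finType) (f g : T -> T) (L : {set T}) :
  cancel f g -> {in L, forall p, f p \in L} -> {in L, forall p, g p \in L}.
Proof.
move=> fK fL; have fLL : f @: L \subset L.
  by apply/subsetP => _ /imsetP [p pL ->]; exact: fL.
have imL := subset_cardP (card_imset L (can_inj fK)) fLL.
by move=> p; rewrite -imL => /imsetP [q qL ->]; rewrite fK.
Qed.

Lemma cap_bits0 n (h : 'I_n -> bool) : cap_bits 0 h = 0.
Proof. by apply/rowP => i; rewrite !mxE if_same. Qed.

Lemma cap_bits_compl n (a : bits n) (h h' : 'I_n -> bool) :
  (forall i, h' i = ~~ h i) -> cap_bits a h' = a - cap_bits a h.
Proof.
by move=> hC; apply/rowP => i; rewrite !mxE hC; case: (h i); rewrite ?subrr ?subr0.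
Qed.

Section Pullback.
Variables (n : nat) (v : 'I_n -> gate).

(* pullback (x, z) are the exponents of V^-1 X^x Z^z V up to phase, where V is
   the circuit v; pushforward, its inverse, those of V X^x Z^z V^-1. *)
Definition pullback (p : bits n * bits n) : bits n * bits n :=
  (cap_bits p.1 (VK v conjX_x) + cap_bits p.2 (VK v conjZ_x),
   cap_bits p.1 (VK v conjX_z) + cap_bits p.2 (VK v conjZ_z)).

Definition pushforward (p : bits n * bits n) : bits n * bits n :=
  (cap_bits p.1 (VK v [:: gI; gP; gHP; gPHP]) + cap_bits p.2 (VK v [:: gHP; gPHP; gPH; gH]),
   cap_bits p.1 (VK v [:: gP; gHP; gPH; gH]) + cap_bits p.2 (VK v [:: gI; gP; gPH; gPHP])).

Lemma pullbackK : cancel pullback pushforward.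
Proof.
case=> x z; congr pair; apply/rowP => i; rewrite !mxE /VK.
all: by case: (F2_cases (x 0 i)) => ->; case: (F2_cases (z 0 i)) => ->;
  case: (v i) => /=; apply/eqP.
Qed.

Definition css_pairs (A B : 'M['F_2]_n) : {set bits n * bits n} :=
  [set p | (p.1 <= A)%MS && (p.2 <= B)%MS].

Lemma pullback_stable (A B : 'M['F_2]_n) (g q : 'I_n -> 'M[algC]_2) (c : 'I_n -> algC) :
  A *m B^T = 0 -> logical A B (tens g) -> (forall i, clifford1 (g i)) ->
  (forall i, pauli1 (q i)) -> (forall i, g i = c i *: (gate_mx (v i) *m q i)) ->
  {in css_pairs A B, forall p, pullback p \in css_pairs A B}.
Proof.
move=> AB logical_g cliff pauli_q g_form [x z]; rewrite !inE /= => /andP [xA zB].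
have gU i : g i \in unitmx := clifford1_unit (cliff i).
have conjX i : proportional ((if x 0 i == 1 then Xg else 1%:M) *m g i)
    (g i *m pauli_shift (cap_bits x (VK v conjX_x) 0 i) (cap_bits x (VK v conjX_z) 0 i)).
  rewrite g_form /cap_bits !mxE.
  exact: pauli_form_conj (pauli_q i) (gate_conj_pow _ (Xg_gate_conj (v i))).
have conjZ i : proportional ((if z 0 i == 1 then Zg else 1%:M) *m g i)
    (g i *m pauli_shift (cap_bits z (VK v conjZ_x) 0 i) (cap_bits z (VK v conjZ_z) 0 i)).
  rewrite g_form /cap_bits !mxE.
  exact: pauli_form_conj (pauli_q i) (gate_conj_pow _ (Zg_gate_conj (v i))).
have [Xx Xz] := logical_conj_sub AB gU logical_g (fun psi psiC => psiC.1 x xA) conjX.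
have [Zx Zz] := logical_conj_sub AB gU logical_g (fun psi psiC => psiC.2 z zB) conjZ.
by rewrite !addmx_sub.
Qed.

Lemma pushforward_stable_caps (A B : 'M['F_2]_n) :
  {in css_pairs A B, forall p, pushforward p \in css_pairs A B} ->
  (forall a : bits n, (a <= A)%MS ->
     (cap_bits a (VK v [:: gP; gHP; gPH; gH]) <= B)%MS /\
     (cap_bits a (VK v [:: gPH; gH]) <= A)%MS) /\
  (forall b : bits n, (b <= B)%MS ->
     (cap_bits b (VK v [:: gHP; gPHP; gPH; gH]) <= A)%MS /\
     (cap_bits b (VK v [:: gHP; gH]) <= B)%MS).
Proof.
move=> push_stable; split=> [a aA | b bB].
  have := push_stable (a, 0); rewrite !inE /= aA sub0mx => /(_ isT) /andP [xA zB].
  rewrite /pushforward /= !cap_bits0 !addr0 in xA zB.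
  split=> //; rewrite (@cap_bits_compl _ _ (VK v [:: gI; gP; gHP; gPHP])) ?submxB_closed //.
  by move=> i; rewrite /VK; case: (v i).
have := push_stable (0, b); rewrite !inE /= bB sub0mx => /(_ isT) /andP [xA zB].
rewrite /pushforward /= !cap_bits0 !add0r in xA zB.
split=> //; rewrite (@cap_bits_compl _ _ (VK v [:: gI; gP; gPH; gPHP])) ?submxB_closed //.
by move=> i; rewrite /VK; case: (v i).
Qed.

End Pullback.

Theorem proposition6 (n : nat) (A B : 'M['F_2]_n) (g : 'I_n -> 'M[algC]_2) :
  (A *m B^T = 0) ->
  (forall i, clifford1 (g i)) ->
  logical A B (tens g) ->
  exists (v : 'I_n -> gate) (q : 'I_n -> 'M[algC]_2) (lam : algC),
    (forall i, pauli1 (q i)) /\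
    (forall s t, tens g s t =
                 lam * opmul (tens (fun i => gate_mx (v i))) (tens q) s t) /\
    (forall a : bits n, (submx a A) ->
       (submx (cap_bits a (VK v [:: gP; gHP; gPH; gH])) B) /\
       (submx (cap_bits a (VK v [:: gPH; gH])) A)) /\
    (forall b : bits n, (submx b B) ->
       (submx (cap_bits b (VK v [:: gHP; gPHP; gPH; gH])) A) /\
       (submx (cap_bits b (VK v [:: gHP; gH])) B)).
Proof.
move=> AB cliff logical_g.
have [v /fin_all_exists [q /fin_all_exists [c form]]] :=
  fin_all_exists (fun i => clifford1_pauli_form (cliff i)).
have pauli_q i : pauli1 (q i) by case: (form i).
have g_form i : g i = c i *: (gate_mx (v i) *m q i) by case: (form i).
exists v, q, (\prod_i c i); split=> //; split.
  by move=> s t; rewrite (functional_extensionality _ _ g_form) tens_scale tens_mul.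
apply: pushforward_stable_caps.
exact: can_stable (pullbackK v) (pullback_stable AB logical_g cliff pauli_q g_form).
Qed.
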